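(* Let $K\subseteq\mathbb{Z}^{S}$ be an M-convex set on a finite ground-set $S$ and let $m$ be a decreasingly minimal element of $K$. Then every decreasingly minimal element of $K$ can be obtained from $m$ by a sequence of at most $|S|$ elementary steps.
   Context: An M-convex set is the set of integral points of an integral base-polyhedron. An element of $K$ is decreasingly minimal if its largest component is as small as possible, within this its second largest as small as possible, and so on. For a decreasingly minimal $m\in K$, an elementary step replaces $m$ by $m'=m+\chi_s-\chi_t$, where $s,t\in S$, $m'\in K$ and $m(t)=m(s)+1$ ($\chi_v$ the unit vector of $v$); the result is again decreasingly minimal. *)

From HB Require Import structures.
From mathcomp Require Import all_boot all_order all_algebra.
Set Implicit Arguments. Unset Strict Implicit. Unset Printing Implicit Defensive.
Import Order.TTheory GRing.Theory Num.Theory.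
Local Open Scope ring_scope.

Notation vec S := {ffun S -> int}.

(* A set function b : 2^S -> Z ∪ {+oo}; None encodes +oo. *)
Definition setfun (S : finType) := {set S} -> option int.

Definition vsum (S : finType) (x : vec S) (X : {set S}) : int := \sum_(i in X) x i.

(* Submodular inequality b(X)+b(Y) >= b(X∩Y)+b(X∪Y), with the usual
   convention for +oo: whenever b(X), b(Y) are finite, so are b(X∩Y), b(X∪Y),
   and the inequality holds. *)
Definition integral_submodular (S : finType) (b : setfun S) : Prop :=
  [/\ b set0 = Some 0,
      (exists c, b setT = Some c) &
      forall X Y x y, b X = Some x -> b Y = Some y ->
        exists u v, [/\ b (X :&: Y) = Some u, b (X :|: Y) = Some v & u + v <= x + y]].

Definition in_base (S : finType) (b : setfun S) (x : vec S) : Prop :=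
  (forall Z c, b Z = Some c -> vsum x Z <= c) /\ b setT = Some (vsum x setT).

Definition M_convex (S : finType) (K : vec S -> Prop) : Prop :=
  exists b : setfun S, integral_submodular b /\ forall x, K x <-> in_base b x.

Definition decvec (S : finType) (x : vec S) : seq int :=
  sort (fun a c : int => c <= a) [seq x i | i <- enum S].

Fixpoint lexlt (s t : seq int) : bool :=
  match s, t with
  | a :: s', c :: t' => (a < c) || ((a == c) && lexlt s' t')
  | [::], _ :: _ => true
  | _, _ => false
  end.

Definition dec_min (S : finType) (K : vec S -> Prop) (m : vec S) : Prop :=
  K m /\ forall y, K y -> ~~ lexlt (decvec y) (decvec m).

Definition chi (S : finType) (v : S) : vec S := [ffun i => (i == v)%:R].

Definition elem_step (S : finType) (K : vec S -> Prop) (m m' : vec S) : Prop :=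
  dec_min K m /\
  exists s t : S, [/\ m' = m + chi s - chi t, K m' & m t = m s + 1].

Fixpoint reach_le (S : finType) (K : vec S -> Prop) (n : nat) (m m' : vec S) : Prop :=
  match n with
  | 0%N => m = m'
  | n'.+1 => m = m' \/ exists m'', elem_step K m m'' /\ reach_le K n' m'' m'
  end.

From mathcomp Require Import all_boot all_order all_algebra perm.
From mathcomp Require Import zify.
Import Order.TTheory GRing.Theory Num.Theory.
Set Implicit Arguments. Unset Strict Implicit. Unset Printing Implicit Defensive.
Local Open Scope ring_scope.

(* If m <> m' are both decreasingly minimal, pick t maximizing max (m t) (m' t)
   among the coordinates where they differ, with m t > m' t.  The exchange
   property of base polyhedra gives s with m s < m' s and m + chi s - chi t in K,
   and decreasing minimality of m forces m t = m s + 1 = m' s.  This elementary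
   step only swaps two components of m, so it keeps m decreasingly minimal, and
   it removes s from {i | m i < m' i} without adding anything.  Hence at most
   |S| steps lead from m to m'. *)

Lemma lexlt_count (k : int) (s t : seq int) :
  sorted >=%O s -> sorted >=%O t ->
  (forall k', k < k' -> count (>= k') s = count (>= k') t) ->
  (count (>= k) s < count (>= k) t)%N -> lexlt s t.
Proof.
elim: s t => [|x s IH] [|y t] sorted_s sorted_t eq_above lt_k //=.
case: (ltgtP x y) => [//|y_lt_x|eq_xy]; last first.
  subst y; apply: IH; rewrite ?(path_sorted sorted_s, path_sorted sorted_t) //.
    by move=> k' /eq_above /addnI.
  by rewrite ltn_add2l in lt_k.
have none_above z : y < z -> count (>= z) (y :: t) = 0%N.
  move=> y_lt_z; apply/eqP; rewrite -leqn0 leqNgt -has_count; apply/hasPn => w /=.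
  rewrite in_cons -ltNge => /predU1P[->|w_t] //.
  exact: le_lt_trans (allP (order_path_min ge_trans sorted_t) w w_t) y_lt_z.
case: (ltP k x) => [k_lt_x | x_le_k].
  by have := eq_above x k_lt_x; rewrite none_above //= lexx.
by move: lt_k; rewrite none_above ?(lt_le_trans y_lt_x).
Qed.

Section Vectors.
Variable S : finType.
Implicit Types (x y : {ffun S -> int}) (Z : {set S}).

Lemma stepE x (u v i : S) : (x + chi u - chi v) i = x i + (i == u)%:R - (i == v)%:R.
Proof. by rewrite !ffunE. Qed.

Lemma vsum_chi Z (v : S) : vsum (chi v) Z = (v \in Z)%:R.
Proof.
case vZ: (v \in Z); rewrite /vsum.
  rewrite (bigD1 v) //= ffunE eqxx big1 ?addr0 // => i /andP[_ /negbTE].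
  by rewrite ffunE => ->.
by apply: big1 => i iZ; rewrite ffunE; case: eqP iZ => // ->; rewrite vZ.
Qed.

Lemma vsum_step x (u v : S) Z :
  vsum (x + chi u - chi v) Z = vsum x Z + (u \in Z)%:R - (v \in Z)%:R.
Proof.
rewrite -!vsum_chi /vsum -big_split -sumrB /=.
by apply: eq_bigr => i _; rewrite !ffunE.
Qed.

Lemma vsum_modular x X Y :
  vsum x X + vsum x Y = vsum x (X :&: Y) + vsum x (X :|: Y).
Proof.
rewrite /vsum !(big_mkcond (fun i => i \in _)) -!big_split /=.
apply: eq_bigr => i _; rewrite in_setI in_setU.
by case: (i \in X); case: (i \in Y); rewrite /= ?addr0 ?add0r.
Qed.

Lemma vsum_setT x Z : vsum x setT = vsum x Z + vsum x (~: Z).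
Proof. by rewrite /vsum (big_setID Z) /= setTI setTD. Qed.

Lemma card_lt_step x y (s t : S) :
  x s < y s -> y s <= x s + 1 -> y t < x t ->
  (#|[set i | ((x + chi s - chi t) i < y i)%R]| < #|[set i | (x i < y i)%R]|)%N.
Proof.
move=> lt_s le_s lt_t; have st : s != t by apply: contraTneq lt_s => ->; lia.
apply: proper_card; apply/properP; split.
  apply/subsetP => i; rewrite !inE stepE.
  have [->|_] := eqVneq i s; first by rewrite (negbTE st); lia.
  by have [->|_] := eqVneq i t; lia.
by exists s; rewrite !inE // stepE eqxx (negbTE st) /=; lia.
Qed.

End Vectors.

Section BasePolyhedron.
Variables (S : finType) (b : setfun S).
Hypothesis b_submod : integral_submodular b.
Implicit Types (x y : {ffun S -> int}) (Z : {set S}).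

Definition tight x Z := b Z == Some (vsum x Z).

Lemma tight_set0 x : tight x set0.
Proof. by case: b_submod => b0 _ _; rewrite /tight b0 /vsum big_set0. Qed.

Lemma tight_setU x X Y : in_base b x -> tight x X -> tight x Y -> tight x (X :|: Y).
Proof.
case: b_submod => _ _ submod [x_le _] /eqP tX /eqP tY.
have [u [w [bI bU le]]] := submod _ _ _ _ tX tY.
have := x_le _ _ bI; have := x_le _ _ bU; have := vsum_modular x X Y.
by rewrite /tight bU => *; apply/eqP; congr Some; lia.
Qed.

Lemma exists_max_tight_avoiding x (v : S) : in_base b x ->
  exists Z, [/\ tight x Z, v \notin Z & forall Y, tight x Y -> v \notin Y -> Y \subset Z].
Proof.
move=> xb; pose P Y := tight x Y && (v \notin Y).
exists (\bigcup_(Y | P Y) Y).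
suff /andP[] : P (\bigcup_(Y | P Y) Y).
  by split=> // Y tY vY; apply: bigcup_sup; apply/andP.
apply: (big_ind P) => [|X Y /andP[tX vX] /andP[tY vY]|//].
  by rewrite /P tight_set0 inE.
by rewrite /P tight_setU // inE negb_or vX vY.
Qed.

Lemma exists_increase_outside x y Z (v : S) :
  in_base b x -> in_base b y -> tight x Z -> v \notin Z -> y v < x v ->
  exists2 u, u \notin Z & x u < y u.
Proof.
move=> [_ xT] [y_le yT] tZ vZ lt_v.
have [u /andP[uZ lt_u] | no_increase] := pickP [pred u | (u \notin Z) && (x u < y u)].
  by exists u.
have le_out i : i \in ~: Z -> y i <= x i.
  by rewrite inE => iZ; have := no_increase i; rewrite /= iZ /= leNgt => /negbT.
have lt_out : vsum y (~: Z) < vsum x (~: Z).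
  rewrite /vsum (bigD1 v) ?inE // [X in _ < X](bigD1 v) ?inE //=.
  by apply: ltr_leD => //; apply: ler_sum => i /andP[/le_out].
have le_in : vsum y Z <= vsum x Z by apply: y_le; apply/eqP.
have := ler_ltD le_in lt_out; rewrite -!vsum_setT.
by move: xT; rewrite yT => -[->]; rewrite ltxx.
Qed.

Lemma in_base_step x (u v : S) : in_base b x ->
  (forall Z, u \in Z -> v \notin Z -> ~~ tight x Z) -> in_base b (x + chi u - chi v).
Proof.
move=> [x_le xT] loose; split; last by rewrite vsum_step !inE addrK.
move=> Z c bZ; rewrite vsum_step; have := x_le _ _ bZ.
case uZ: (u \in Z); case vZ: (v \in Z) => /=; try lia.
have : vsum x Z != c by apply: contra (loose Z uZ (negbT vZ)); rewrite /tight bZ => /eqP->.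
lia.
Qed.

(* u is taken outside the largest x-tight set avoiding v, so that no x-tight set
   separates u from v. *)
Lemma base_exchange x y (v : S) : in_base b x -> in_base b y -> y v < x v ->
  exists u, x u < y u /\ in_base b (x + chi u - chi v).
Proof.
move=> xb yb lt_v.
have [Z [tZ vZ maxZ]] := exists_max_tight_avoiding v xb.
have [u uZ lt_u] := exists_increase_outside xb yb tZ vZ lt_v.
exists u; split => //; apply: in_base_step => // Y uY vY; apply: contra uZ => tY.
exact: subsetP (maxZ Y tY vY) u uY.
Qed.

End BasePolyhedron.

Section DecreasingMinimality.
Variables (S : finType) (K : {ffun S -> int} -> Prop).
Implicit Types (x y : {ffun S -> int}).

Lemma sorted_decvec x : sorted >=%O (decvec x).
Proof. exact: sort_sorted ge_total _. Qed.

Lemma count_decvec x (p : pred int) : count p (decvec x) = #|[set i | p (x i)]|.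
Proof.
rewrite /decvec enumT (seq.permP (permEl (perm_sort _ _))) count_map cardE size_filter.
by apply: eq_count => i /=; rewrite inE.
Qed.

Lemma decvec_lexlt x y (k : int) :
  (forall i, (k < x i) || (k < y i) -> y i = x i) ->
  [set i | k <= y i] \proper [set i | k <= x i] -> lexlt (decvec y) (decvec x).
Proof.
move=> same_above fewer; apply: (lexlt_count (k := k)); rewrite ?sorted_decvec //.
  move=> k' lt_k'; rewrite !count_decvec; apply: eq_card => i; rewrite !inE.
  case: (boolP ((k < x i) || (k < y i))) => [/same_above -> // |].
  by rewrite negb_or -!leNgt => /andP[xk yk]; rewrite !leNgt (le_lt_trans xk) ?(le_lt_trans yk).
by rewrite !count_decvec; exact: proper_card.
Qed.

Lemma dec_min_step_le x (u v : S) :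
  dec_min K x -> K (x + chi u - chi v) -> x v <= x u + 1.
Proof.
move=> [_ x_min] Ky; rewrite leNgt; apply/negP => lt_vu.
have uv : u != v by apply: contraTneq lt_vu => ->; lia.
apply: (negP (x_min _ Ky)); apply: (decvec_lexlt (k := x v)).
  move=> i; rewrite stepE.
  have [->|_] := eqVneq i u; first by rewrite (negbTE uv); lia.
  by have [->|_] := eqVneq i v; lia.
apply/properP; split.
  apply/subsetP => i; rewrite !inE stepE.
  have [->|_] := eqVneq i u; first by rewrite (negbTE uv); lia.
  by have [->|_] := eqVneq i v; lia.
by exists v; rewrite !inE // stepE eqxx eq_sym (negbTE uv) /=; lia.
Qed.

Lemma decvec_perm x (s : {perm S}) : decvec [ffun i => x (s i)] = decvec x.
Proof.
apply: (sorted_eq ge_trans ge_anti); rewrite ?sorted_decvec //.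
apply/seq.permP => p; rewrite !count_decvec -[RHS](card_preimset _ (@perm_inj _ s)).
by apply: eq_card => i; rewrite !inE ffunE.
Qed.

Lemma step_tperm x (s t : S) :
  x t = x s + 1 -> x + chi s - chi t = [ffun i => x (tperm s t i)].
Proof.
move=> e; have st : s != t by apply/eqP => est; move: e; rewrite est; lia.
apply/ffunP => i; rewrite stepE ffunE.
case: tpermP => [->|->|/eqP/negbTE-> /eqP/negbTE->].
- by rewrite eqxx (negbTE st) e; lia.
- by rewrite eqxx eq_sym (negbTE st) e; lia.
- by rewrite addr0 subr0.
Qed.

Lemma dec_min_swap x (s t : S) :
  dec_min K x -> K (x + chi s - chi t) -> x t = x s + 1 -> dec_min K (x + chi s - chi t).
Proof.
move=> [_ x_min] Ky e; split=> // y Ky'.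
by rewrite step_tperm // decvec_perm; apply: x_min.
Qed.

End DecreasingMinimality.

Section ElementarySteps.
Variables (S : finType) (b : setfun S) (K : {ffun S -> int} -> Prop).
Hypotheses (b_submod : integral_submodular b) (K_base : forall x, K x <-> in_base b x).
Implicit Types (m : {ffun S -> int}).

Lemma dec_min_drop_top m m' (t : S) :
  dec_min K m -> K m' -> m' t < m t -> (forall j, m j < m' j -> m' j <= m t) ->
  exists s, [/\ m s < m' s, m' s = m t, m t = m s + 1 & K (m + chi s - chi t)].
Proof.
move=> dm Km' lt_t top.
have [u [lt_u bu]] := base_exchange b_submod ((K_base _).1 dm.1) ((K_base _).1 Km') lt_t.
have Ku : K (m + chi u - chi t) by apply/K_base.
have := dec_min_step_le dm Ku; have := top u lt_u.
by exists u; split => //; lia.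
Qed.

(* If max (m i) (m' i) over the differing coordinates is attained only by m',
   the drop from m' lands on a coordinate where m attains it. *)
Lemma exists_top_drop m m' : dec_min K m -> dec_min K m' -> m != m' ->
  exists t, m' t < m t /\ forall j, m j < m' j -> m' j <= m t.
Proof.
move=> dm dm' ne.
have [i0 i0_diff] : exists i0, m i0 != m' i0.
  apply/existsP; apply: contraNT ne => /existsPn all_eq.
  by apply/eqP/ffunP => i; apply/eqP/negPn/all_eq.
pose F i := Num.max (m i) (m' i).
case: (arg_maxP (P := [pred i | m i != m' i]) F i0_diff) => w w_diff w_max.
have bound j : m j != m' j -> m j <= F w /\ m' j <= F w.
  by move=> /w_max /=; rewrite /F ge_max => /andP.
case: (ltgtP (m' w) (m w)) => [lt_w|gt_w|eq_w]; last by move: w_diff => /=; rewrite eq_w eqxx.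
  have Fw : F w = m w by rewrite /F max_l // ltW.
  by exists w; split=> // j lt_j; rewrite -Fw; apply: (bound j _).2; rewrite lt_eqF.
have Fw : F w = m' w by rewrite /F max_r // ltW.
have top' j : m' j < m j -> m j <= m' w.
  by move=> lt_j; rewrite -Fw; apply: (bound j _).1; rewrite gt_eqF.
have [s [lt_s eq_s _ _]] := dec_min_drop_top dm' dm.1 gt_w top'.
by exists s; split=> // j lt_j; rewrite eq_s -Fw; apply: (bound j _).2; rewrite lt_eqF.
Qed.

Lemma exists_elem_step m m' : dec_min K m -> dec_min K m' -> m != m' ->
  exists s t, [/\ m s < m' s, m' s <= m s + 1, m' t < m t, m t = m s + 1
                & K (m + chi s - chi t)].
Proof.
move=> dm dm' ne; have [t [lt_t top]] := exists_top_drop dm dm' ne.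
have [s [lt_s eq_s e K_st]] := dec_min_drop_top dm dm'.1 lt_t top.
by exists s, t; split => //; rewrite eq_s e.
Qed.

Lemma reach_le_card m m' n : dec_min K m -> dec_min K m' ->
  (#|[set i | (m i < m' i)%R]| <= n)%N -> reach_le K n m m'.
Proof.
move=> + dm'; elim: n m => [|n IH] m dm le_n.
  have [// | ne] := eqVneq m m'.
  have [s [t [lt_s _ _ _ _]]] := exists_elem_step dm dm' ne.
  by move: le_n; rewrite leqn0 cards_eq0 => /eqP/setP/(_ s); rewrite !inE lt_s.
have [-> | ne] := eqVneq m m'; [by left | right].
have [s [t [lt_s le_s lt_t e K_st]]] := exists_elem_step dm dm' ne.
exists (m + chi s - chi t); split; first by split=> //; exists s, t.
apply: IH; first exact: dec_min_swap.
by rewrite -ltnS; apply: leq_trans le_n; apply: card_lt_step.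
Qed.

End ElementarySteps.

Theorem claim5p3 (S : finType) (K : {ffun S -> int} -> Prop) (m : {ffun S -> int}) :
  M_convex K -> dec_min K m ->
  forall m' : {ffun S -> int}, dec_min K m' -> reach_le K #|S| m m'.
Proof.
move=> [b [b_submod K_base]] dm m' dm'.
by apply: (reach_le_card b_submod K_base dm dm'); apply: max_card.
Qed.
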